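(* Let $p$ be a prime and let $B$ be a finite brace whose order is a power of $p$. If $B$ is supersoluble, then $B$ is centrally nilpotent.
   Context: A brace (skew left brace) is a set $B$ with two binary operations $+$ and $\cdot$ such that $(B,+)$ and $(B,\cdot)$ are groups and $a(b+c)=ab-a+ac$ for all $a,b,c\in B$. $\lambda_a(b)=-a+ab$ defines a homomorphism $\lambda\colon(B,\cdot)\to\operatorname{Aut}(B,+)$. An ideal is a subset that is a subgroup of both groups, normal in both, and invariant under all $\lambda_b$; quotients by ideals are braces. $\operatorname{Soc}(B)=\operatorname{Ker}\lambda\cap Z(B,+)$, $\zeta(B)=\operatorname{Soc}(B)\cap Z(B,\cdot)$; $\zeta_0(B)=\{0\}$, $\zeta_{k+1}(B)/\zeta_k(B)=\zeta(B/\zeta_k(B))$; $B$ is centrally nilpotent if $B=\zeta_m(B)$ for some $m$. $B$ is supersoluble if there is a finite chain of ideals $\{0\}=I_0\le\dots\le I_n=B$ such that for each $i$, either $(I_{i+1}/I_i,+)$ is infinite cyclic and $I_{i+1}/I_i\le\operatorname{Soc}(B/I_i)$, or $I_{i+1}/I_i$ has prime order. *)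

From mathcomp Require Import all_boot all_algebra.
Set Implicit Arguments. Unset Strict Implicit. Unset Printing Implicit Defensive.

(* A (skew left) brace on a carrier T: two group structures and the brace law
   a(b+c) = ab - a + ac.  (B,+) need not be abelian. *)
Record brace (T : Type) := Brace {
  badd : T -> T -> T; bzero : T; bneg : T -> T;
  bmul : T -> T -> T; bone : T; binv : T -> T;
  baddA : forall a b c, badd a (badd b c) = badd (badd a b) c;
  badd0r : forall a, badd a bzero = a;
  badd0l : forall a, badd bzero a = a;
  baddNr : forall a, badd a (bneg a) = bzero;
  baddNl : forall a, badd (bneg a) a = bzero;
  bmulA : forall a b c, bmul a (bmul b c) = bmul (bmul a b) c;
  bmul1r : forall a, bmul a bone = a;
  bmul1l : forall a, bmul bone a = a;
  bmulVr : forall a, bmul a (binv a) = bone;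
  bmulVl : forall a, bmul (binv a) a = bone;
  bbrace : forall a b c,
    bmul a (badd b c) = badd (badd (bmul a b) (bneg a)) (bmul a c)
}.

Section BraceDefs.
Variables (T : finType) (B : brace T).
Local Notation "a + b" := (badd B a b).
Local Notation "- a" := (bneg B a).
Local Notation "a * b" := (bmul B a b).
Local Notation "0" := (bzero B).
Local Notation "1" := (bone B).

Definition blambda (a b : T) : T := - a + a * b.

Definition is_ideal (I : {set T}) : Prop :=
  (0 \in I /\ {in I &, forall x y, x + y \in I} /\ {in I, forall x, - x \in I}) /\
  (1 \in I /\ {in I &, forall x y, x * y \in I} /\ {in I, forall x, binv B x \in I}) /\
  (forall b, {in I, forall x, b + x + - b \in I}) /\
  (forall b, {in I, forall x, b * x * binv B b \in I}) /\
  (forall b, {in I, forall x, blambda b x \in I}).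

(* For an ideal J: the coset of a lies in Soc(B/J), i.e. a+J is in Ker lambda
   of B/J and in the centre of (B/J,+). *)
Definition in_soc_mod (J : {set T}) (a : T) : bool :=
  [forall b, (- b + blambda a b \in J) && (a + b + - a + - b \in J)].

(* The coset a+J lies in zeta(B/J) = Soc(B/J) ∩ Z(B/J, .). *)
Definition in_zeta_mod (J : {set T}) (a : T) : bool :=
  in_soc_mod J a && [forall b, a * b * binv B a * binv B b \in J].

Fixpoint zeta_k (k : nat) : {set T} :=
  match k with
  | O => [set 0]
  | S k' => [set a | in_zeta_mod (zeta_k k') a]
  end.

Definition centrally_nilpotent : Prop := exists m, zeta_k m = setT.

Definition bnmul (n : nat) (g : T) : T := iter n (fun x => g + x) 0.
Definition bzmul (z : int) (g : T) : T :=
  match z with Posz n => bnmul n g | Negz n => - bnmul n.+1 g end.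

(* (I/J,+) is infinite cyclic (J ideal, J ⊆ I): some g in I whose integer
   multiples give pairwise distinct cosets mod J that cover I. *)
Definition infinite_cyclic_factor (I J : {set T}) : Prop :=
  exists2 g, g \in I &
    (forall z1 z2 : int, - bzmul z2 g + bzmul z1 g \in J -> z1 = z2) /\
    {in I, forall x, exists z : int, - bzmul z g + x \in J}.

(* |I/J| is prime (J a subgroup of I, so |I/J| = |I|/|J|). *)
Definition prime_order_factor (I J : {set T}) : Prop :=
  exists2 q, prime q & #|I| = (q * #|J|)%N.

Definition supersoluble : Prop :=
  exists n (I : nat -> {set T}),
    [/\ I 0%N = [set 0], I n = setT,
        (forall i, (i <= n)%N -> is_ideal (I i)) &
        (forall i, (i < n)%N -> I i \subset I i.+1 /\
           ((infinite_cyclic_factor (I i.+1) (I i) /\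
             {in I i.+1, forall x, in_soc_mod (I i) x})
            \/ prime_order_factor (I i.+1) (I i)))].

End BraceDefs.

(* If |B| is a power of p, then (B,+) and (B,.) are p-groups, and each lambda_b
   has order dividing that of b.  Let J <= I be ideals with |I/J| = p.
   Conjugations in (B,+) and in (B,.), and the maps lambda_b, are automorphisms
   of p-power order that permute the p cosets of J in I and fix J itself;
   counting fixed points modulo p, they fix every coset.  So I/J is central in
   both groups and lambda acts trivially on it, i.e. I/J <= zeta(B/J).  In a
   finite brace every factor of a supersoluble series has prime order, hence
   by induction the i-th term of the series lies in zeta_i(B). *)

From HB Require Import structures.
From mathcomp Require Import all_boot all_algebra all_fingroup all_solvable.
Set Implicit Arguments. Unset Strict Implicit. Unset Printing Implicit Defensive.
Import GroupScope.

Section PElementAutomorphism.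
Variables (gT : finGroupType) (p : nat) (J I : {group gT}).
Hypothesis iJI : #|I : J| = p.

Lemma pelt_aut_fix_lcosets (a : {perm gT}) :
  p.-elt a -> {morph a : x y / x * y} ->
  {in J, forall x, a x \in J} -> {in I, forall x, a x \in I} ->
  {in I, forall x, a x \in x *: J}.
Proof.
move=> pa aM aJ aI.
set S := lcosets J I.
have aJJ : a @: J = J.
  apply/eqP; rewrite eqEcard card_imset ?leqnn ?andbT //; last exact: perm_inj.
  by apply/subsetP => _ /imsetP[x Jx ->]; apply: aJ.
have a_lcoset x : a @: (x *: J) = a x *: J.
  rewrite -{2}aJJ -!lcosetE /lcoset -!imset_comp.
  by apply: eq_imset => y /=; rewrite aM.
have aSS : (fun A : {set gT} => a @: A) @: S = S.
  apply/eqP; rewrite eqEcard card_imset ?leqnn ?andbT; last exact/imset_inj/perm_inj.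
  apply/subsetP => _ /imsetP[_ /imsetP[x Ix ->] ->].
  by rewrite /= lcosetE a_lcoset -lcosetE; apply: imset_f; apply: aI.
have actsS : [acts <[a]>, on S | 'P^*].
  rewrite cycle_subG; apply/astabsP => A.
  by rewrite -{1}aSS; apply: (mem_imset _ _ (imset_inj perm_inj)).
have JS : (J : {set gT}) \in S by rewrite -(lcoset1 J) -lcosetE imset_f.
have fixJ : (J : {set gT}) \in 'Fix_(S | 'P^*)(<[a]>).
  by rewrite inE JS afix_cycle; apply/afix1P; exact: aJJ.
have cardS : #|S| = p by rewrite card_lcosets.
have fixS : 'Fix_(S | 'P^*)(<[a]>) = S.
  have := pgroup_fix_mod pa actsS; rewrite cardS modnn => /esym/eqP dvd_p_fix.
  apply/eqP; rewrite eqEcard subsetIl cardS dvdn_leq //.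
  by apply/card_gt0P; exists (J : {set gT}).
move=> x Ix; have : x *: J \in 'Fix_(S | 'P^*)(<[a]>) by rewrite fixS -lcosetE imset_f.
rewrite inE afix_cycle => /andP[_ /afix1P ax].
by apply/lcoset_eqP; rewrite -a_lcoset.
Qed.

Lemma pgroup_index_p_central :
  p.-group [set: gT] -> [set: gT] \subset 'N(J) -> [set: gT] \subset 'N(I) ->
  {in I, forall x y, [~ x, y] \in J}.
Proof.
move=> pG nJ nI x Ix y.
have aJy z : actperm 'J y z = z ^ y by rewrite actpermE.
have pa : p.-elt (actperm 'J y).
  by apply: (morph_p_elt (actperm_morphism 'J)); rewrite ?inE // (mem_p_elt pG) ?inE.
have := pelt_aut_fix_lcosets pa _ _ _ Ix; rewrite aJy mem_lcoset; apply.
- by move=> z t; rewrite !aJy conjMg.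
- by move=> z Jz; rewrite aJy memJ_norm ?(subsetP nJ).
- by move=> z Iz; rewrite aJy memJ_norm ?(subsetP nI).
Qed.
End PElementAutomorphism.

Section BraceGroups.
Variables (T : finType) (B : brace T).

(* The dummy argument keys the canonical group structures on [T] to [B]. *)
Definition brace_add (_ : brace T) : Type := T.
Definition brace_mul (_ : brace T) : Type := T.
HB.instance Definition _ := Finite.on (brace_add B).
HB.instance Definition _ :=
  Finite_isGroup.Build (brace_add B) (@baddA _ B) (@badd0l _ B) (@baddNl _ B).
HB.instance Definition _ := Finite.on (brace_mul B).
HB.instance Definition _ :=
  Finite_isGroup.Build (brace_mul B) (@bmulA _ B) (@bmul1l _ B) (@bmulVl _ B).

Local Notation addB := (brace_add B).
Local Notation mulB := (brace_mul B).
Local Notation lambda := (blambda B).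

Lemma card_brace_add : #|[set: addB]| = #|T|.
Proof. by rewrite cardsT; apply: (@bij_eq_card addB T id); exists id. Qed.

Lemma card_brace_mul : #|[set: mulB]| = #|T|.
Proof. by rewrite cardsT; apply: (@bij_eq_card mulB T id); exists id. Qed.

Lemma bbraceE a u v :
  bmul B a ((u : addB) * v) = (bmul B a u : addB) * (a : addB)^-1 * bmul B a v.
Proof. exact: bbrace. Qed.

Lemma bmul_zero (a : T) : bmul B a (bzero B) = a.
Proof.
pose m : addB := bmul B a (bzero B).
have e : m = m * (a : addB)^-1 * m.
  by have := bbraceE a (bzero B) (bzero B); rewrite mulg1.
by apply/esym/(mulgI (m * (a : addB)^-1)); rewrite -e mulgKV.
Qed.

Lemma bone_eq0 : bone B = bzero B.
Proof. by rewrite -(bmul_zero (bone B)) bmul1l. Qed.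

Lemma lambdaE b y : lambda b y = (b : addB)^-1 * bmul B b y.
Proof. by []. Qed.

Lemma lambdaD b : {morph lambda b : u v / badd B u v}.
Proof. by move=> u v; rewrite /blambda bbrace !baddA. Qed.

Lemma lambda1 y : lambda (bone B) y = y.
Proof. by rewrite lambdaE bmul1l bone_eq0 invg1 mul1g. Qed.

Lemma lambda_comp a c y : lambda a (lambda c y) = lambda (bmul B a c) y.
Proof.
pose ac : addB := bmul B a c.
have a_ac : (a : addB)^-1 * bmul B a (c : addB)^-1 = ac^-1 * a.
  have a_expand : (a : addB) = ac * (a : addB)^-1 * bmul B a (c : addB)^-1.
    by rewrite -{1}(bmul_zero a) -(baddNr B c) bbraceE.
  by rewrite [X in _ = _ * X]a_expand -!mulgA mulKg.
by rewrite !lambdaE bbraceE bmulA !mulgA a_ac mulgK.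
Qed.

Lemma lambda_inj b : injective (lambda b).
Proof.
move=> y z e.
by rewrite -[y]lambda1 -[z]lambda1 -(bmulVl B b) -!lambda_comp e.
Qed.

Definition lambda_perm b : {perm addB} := @perm addB _ (@lambda_inj b).

Lemma lambda_permE b y : lambda_perm b y = lambda b y.
Proof. exact: permE. Qed.

Lemma lambda_permX b k : lambda_perm b ^+ k = lambda_perm ((b : mulB) ^+ k).
Proof.
apply/permP => y; rewrite permX permE.
elim: k => [|k IHk]; first by rewrite lambda1.
by rewrite iterS IHk permE lambda_comp expgS.
Qed.

Lemma p_elt_lambda_perm p b : p.-nat #|T| -> p.-elt (lambda_perm b).
Proof.
move=> pT; have pb : p.-elt (b : mulB).
  by apply: (mem_p_elt (G := [set: mulB]%G)); rewrite ?inE // /pgroup card_brace_mul.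
apply: pnat_dvd pb; rewrite order_dvdn lambda_permX expg_order.
by apply/eqP/permP => y; rewrite permE perm1 lambda1.
Qed.

Lemma lambda_ldiv c a : lambda c (bmul B (binv B c) a) = (c : addB)^-1 * a.
Proof. by rewrite /blambda bmulA bmulVr bmul1l. Qed.

Lemma lambda_commgE (x b : T) :
  (b : addB)^-1 * lambda x b =
  [~ (b : addB), (x : addB)] * ((x : addB)^-1 * lambda b x) *
  lambda (bmul B b x) [~ (x : mulB), (b : mulB)].
Proof.
have -> : [~ (x : mulB), (b : mulB)] = ((b : mulB) * x)^-1 * ((x : mulB) * b).
  by rewrite commgEl conjgE invMg !mulgA.
by rewrite lambda_ldiv !lambdaE commgEl conjgE !mulgA !mulgK.
Qed.

Section IdealSubgroups.
Variables (I : {set T}) (idI : is_ideal B I).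

Definition ideal_addg : {set addB} := [set x : addB in I].
Definition ideal_mulg : {set mulB} := [set x : mulB in I].

Lemma ideal_addg_group_set : group_set ideal_addg.
Proof.
case: idI => [[I0 [ID _]] _]; apply/group_setP; rewrite inE.
by split=> // x y; rewrite !inE; apply: ID.
Qed.

Lemma ideal_mulg_group_set : group_set ideal_mulg.
Proof.
case: idI => _ [[I1 [IM _]] _]; apply/group_setP; rewrite inE.
by split=> // x y; rewrite !inE; apply: IM.
Qed.

Definition ideal_addG : {group addB} := Group ideal_addg_group_set.
Definition ideal_mulG : {group mulB} := Group ideal_mulg_group_set.

Lemma mem_ideal_addG x : (x \in ideal_addG) = (x \in I).
Proof. by rewrite inE. Qed.

Lemma mem_ideal_mulG x : (x \in ideal_mulG) = (x \in I).
Proof. by rewrite inE. Qed.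

Lemma ideal_addg_norm : [set: addB] \subset 'N(ideal_addg).
Proof.
case: idI => _ [_ [Iconj _]]; apply/subsetP => y _; rewrite inE.
apply/subsetP => _ /imsetP[z Iz ->]; rewrite !inE in Iz *.
by rewrite conjgE mulgA -{2}(invgK y); apply: Iconj.
Qed.

Lemma ideal_mulg_norm : [set: mulB] \subset 'N(ideal_mulg).
Proof.
case: idI => _ [_ [_ [Iconj _]]]; apply/subsetP => y _; rewrite inE.
apply/subsetP => _ /imsetP[z Iz ->]; rewrite !inE in Iz *.
by rewrite conjgE mulgA -{2}(invgK y); apply: Iconj.
Qed.

Lemma card_ideal_addg : #|ideal_addg| = #|I|.
Proof.
rewrite -(@card_imset T addB id I) //; apply: eq_card => x.
by rewrite inE; apply/idP/imsetP => [Ix | [y Iy ->]] //; exists x.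
Qed.

Lemma card_ideal_mulg : #|ideal_mulg| = #|I|.
Proof.
rewrite -(@card_imset T mulB id I) //; apply: eq_card => x.
by rewrite inE; apply/idP/imsetP => [Ix | [y Iy ->]] //; exists x.
Qed.

End IdealSubgroups.

Lemma sub_zeta_mod_of_central (J I : {set T}) :
  is_ideal B J -> is_ideal B I ->
  {in I, forall x (b : addB), [~ (x : addB), b] \in J} ->
  {in I, forall x (b : mulB), [~ (x : mulB), b] \in J} ->
  {in I, forall x b, (x : addB)^-1 * lambda b x \in J} ->
  {in I, forall x, in_zeta_mod B J x}.
Proof.
move=> idJ idI commA commM lambda_fix x Ix.
have [_ [_ [_ [_ lambdaJ]]]] := idJ; have [[_ [_ IN]] [[_ [_ IV]] _]] := idI.
apply/andP; split; [apply/forallP => b; apply/andP; split|].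
- suff : (b : addB)^-1 * lambda x b \in ideal_addG idJ by rewrite inE.
  rewrite lambda_commgE; apply: groupM; first apply: groupM.
  + by rewrite -invgR groupV inE commA.
  + by rewrite inE lambda_fix.
  + by rewrite inE; apply/lambdaJ/commM.
- have := commA _ (IN _ Ix) (b : addB)^-1.
  by rewrite commgEl conjgE !invgK !mulgA.
- apply/forallP => b; have := commM _ (IV _ Ix) (b : mulB)^-1.
  by rewrite commgEl conjgE !invgK !mulgA.
Qed.

Section IndexPFactor.
Variables (p : nat) (J I : {set T}).
Hypotheses (pT : p.-nat #|T|) (idJ : is_ideal B J) (idI : is_ideal B I).
Hypotheses (sJI : J \subset I) (cardI : #|I| = (p * #|J|)%N).

Let J_gt0 : 0 < #|J|.
Proof. by apply/card_gt0P; exists (bzero B); have [[]] := idJ. Qed.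

Lemma index_ideal_addG : #|ideal_addG idI : ideal_addG idJ| = p.
Proof.
rewrite -divgS /= ?card_ideal_addg ?cardI ?mulnK //.
by apply/subsetP => x; rewrite !inE; apply: (subsetP sJI).
Qed.

Lemma index_ideal_mulG : #|ideal_mulG idI : ideal_mulG idJ| = p.
Proof.
rewrite -divgS /= ?card_ideal_mulg ?cardI ?mulnK //.
by apply/subsetP => x; rewrite !inE; apply: (subsetP sJI).
Qed.

Lemma index_p_commg_add : {in I, forall x (b : addB), [~ (x : addB), b] \in J}.
Proof.
move=> x Ix b; have pA : p.-group [set: addB] by rewrite /pgroup card_brace_add.
have := pgroup_index_p_central index_ideal_addG pA
  (ideal_addg_norm idJ) (ideal_addg_norm idI).
by rewrite -mem_ideal_addG; apply; rewrite mem_ideal_addG.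
Qed.

Lemma index_p_commg_mul : {in I, forall x (b : mulB), [~ (x : mulB), b] \in J}.
Proof.
move=> x Ix b; have pM : p.-group [set: mulB] by rewrite /pgroup card_brace_mul.
have := pgroup_index_p_central index_ideal_mulG pM
  (ideal_mulg_norm idJ) (ideal_mulg_norm idI).
by rewrite -mem_ideal_mulG; apply; rewrite mem_ideal_mulG.
Qed.

Lemma index_p_lambda_fix : {in I, forall x b, (x : addB)^-1 * lambda b x \in J}.
Proof.
have [[_ [_ [_ [_ lambdaJ]]]] [_ [_ [_ [_ lambdaI]]]]] := (idJ, idI).
move=> x Ix b; have aM : {morph lambda_perm b : u v / u * v}.
  by move=> u v; rewrite !lambda_permE lambdaD.
have aJ : {in ideal_addG idJ, forall u, lambda_perm b u \in ideal_addG idJ}.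
  by move=> u; rewrite !mem_ideal_addG lambda_permE; apply: lambdaJ.
have aI : {in ideal_addG idI, forall u, lambda_perm b u \in ideal_addG idI}.
  by move=> u; rewrite !mem_ideal_addG lambda_permE; apply: lambdaI.
have := pelt_aut_fix_lcosets index_ideal_addG (p_elt_lambda_perm b pT) aM aJ aI.
by move/(_ x); rewrite lambda_permE mem_lcoset !mem_ideal_addG; apply.
Qed.

End IndexPFactor.

Lemma prime_factor_sub_zeta (p : nat) (J I : {set T}) :
  p.-nat #|T| -> is_ideal B J -> is_ideal B I -> J \subset I ->
  prime_order_factor I J -> {in I, forall x, in_zeta_mod B J x}.
Proof.
move=> pT idJ idI sJI [q q_pr cardI].
have qp : q = p.
  have : q %| #|T|.
    rewrite -card_brace_add (dvdn_trans _ (cardSg (subsetT (ideal_addG idI)))) //=.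
    by rewrite card_ideal_addg cardI dvdn_mulr.
  by move/pnat_dvd/(_ pT); rewrite pnatE // => /eqP.
rewrite {}qp in cardI; apply: (sub_zeta_mod_of_central idJ idI).
- exact: index_p_commg_add pT idJ idI sJI cardI.
- exact: index_p_commg_mul pT idJ idI sJI cardI.
- exact: index_p_lambda_fix pT idJ idI sJI cardI.
Qed.
End BraceGroups.

Lemma in_zeta_modS (T : finType) (B : brace T) (J K : {set T}) x :
  J \subset K -> in_zeta_mod B J x -> in_zeta_mod B K x.
Proof.
move=> /subsetP sJK /andP[/forallP socx /forallP centx].
apply/andP; split; apply/forallP => b; last exact/sJK/centx.
by have /andP[/sJK -> /sJK ->] := socx b.
Qed.

Lemma finite_no_infinite_cyclic_factor (T : finType) (B : brace T) (I J : {set T}) :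
  bzero B \in J -> ~ infinite_cyclic_factor B I J.
Proof.
move=> J0 [g _ [inj_mod_J _]].
have inj_mul : injective (fun k : 'I_#|T|.+1 => bnmul B k g).
  move=> k1 k2 e; apply: val_inj.
  by have := inj_mod_J k1 k2; rewrite /= e baddNl => /(_ J0) [].
by have := leq_card _ inj_mul; rewrite card_ord ltnn.
Qed.

Theorem theorem3p7 (p : nat) (T : finType) (B : brace T) :
  prime p -> (exists n, #|T| = (p ^ n)%N) ->
  supersoluble B -> centrally_nilpotent B.
Proof.
move=> p_pr [n cardT] [m [I [I0 Im idI steps]]]; exists m.
have pT : p.-nat #|T| by rewrite cardT pnatX pnat_id.
suff sub_zeta i : i <= m -> I i \subset zeta_k B i.
  by apply/eqP; rewrite eqEsubset subsetT -Im sub_zeta.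
elim: i => [|i IHi] lt_im; first by rewrite I0.
have idIi := idI i (ltnW lt_im).
have [sII [[icf _] | pof]] := steps i lt_im.
  by have [[I0i _] _] := idIi; case: (finite_no_infinite_cyclic_factor I0i icf).
apply/subsetP => x Ix; rewrite inE; apply: (in_zeta_modS (IHi (ltnW lt_im))).
exact: (prime_factor_sub_zeta pT idIi (idI _ lt_im) sII pof).
Qed.
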